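(* Let $n\geq2$, $m\geq1$ be integers, $\alpha,\beta\in\mathbb{C}$, let $\psi\in\mathbb{R}$ satisfy $\beta-\alpha=|\beta-\alpha|e^{i\psi}$, and let $T^0_{\alpha,\beta}=e^{-i\psi}J_n(0)\oplus|\beta-\alpha|I_m\in M_{n+m}(\mathbb{C})$. Let $k\in\{1,\ldots,n\}$. Then for $\theta\in[0,2\pi]$, $$\lambda_k(\operatorname{Re}(e^{i\theta}T^0_{\alpha,\beta}))=\begin{cases}\cos\psi_{k,m}, & \theta\in C_{k,m},\\ |\beta-\alpha|\cos\theta, & \theta\in[0,2\pi]\setminus(D_k\cup C_{k,m}),\\ \cos\phi_k, & \theta\in D_k.\end{cases}$$
   Context: $J_n(0)$ is the $n\times n$ Jordan block with eigenvalue $0$ (ones on the superdiagonal, zeros elsewhere). For a square matrix $A$, $\operatorname{Re}A=(A+A^* )/2$, and $\lambda_1(A)\geq\lambda_2(A)\geq\cdots$ denote the eigenvalues of the Hermitian matrix in question, in non-increasing order counted with multiplicity. $\phi_k=\frac{k\pi}{n+1}$, $\psi_{k,m}=\frac{(k-m)\pi}{n+1}$; $D_k=\{\theta\in\mathbb{R}:\ |\beta-\alpha|\cos\theta\leq\cos\phi_k\}$; $C_{k,m}=\{\theta\in\mathbb{R}:\ |\beta-\alpha|\cos\theta>\cos\psi_{k,m}\}$ if $k>m$ and $C_{k,m}=\emptyset$ if $k\leq m$. *)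

From HB Require Import structures.
From mathcomp Require Import all_boot all_order all_algebra.
From mathcomp Require Import reals trigo.
From mathcomp Require Import complex.
Set Implicit Arguments. Unset Strict Implicit. Unset Printing Implicit Defensive.
Import Order.TTheory GRing.Theory Num.Theory.
Local Open Scope ring_scope.

Definition expi {R : realType} (t : R) : R[i] := Complex (cos t) (sin t).

Definition cabs {R : realType} (z : R[i]) : R := Normc.normc z.

Definition jordan0 {F : pzRingType} (n : nat) : 'M[F]_n :=
  \matrix_(i < n, j < n) (if (j : nat) == i.+1 then 1 else 0).

Definition dsum {F : pzRingType} (n m : nat) (A : 'M[F]_n) (B : 'M[F]_m)
  : 'M[F]_(n + m) := block_mx A 0 0 B.

Definition adjmx {R : realType} (N : nat) (A : 'M[R[i]]_N) : 'M[R[i]]_N :=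
  (map_mx Num.conj A)^T.
Definition ReMx {R : realType} (N : nat) (A : 'M[R[i]]_N) : 'M[R[i]]_N :=
  (2%:R)^-1 *: (A + adjmx A).

(* Eigenvalues with algebraic multiplicity: a list of the roots (counted with
   multiplicity) of the characteristic polynomial, which splits over the
   algebraically closed field R[i]. *)
Definition eigs_mult {R : realType} (N : nat) (A : 'M[R[i]]_N) : seq R[i] :=
  sval (closed_field_poly_normal (char_poly A)).

(* For a Hermitian matrix the eigenvalues are real; lam_desc A lists them
   (their real parts, which are the eigenvalues themselves) in
   non-increasing order with multiplicity. *)
Definition lam_desc {R : realType} (N : nat) (A : 'M[R[i]]_N) : seq R :=
  sort (fun x y : R => y <= x) [seq complex.Re z | z <- eigs_mult A].

(* lambda_k(A), k = 1, 2, ... (1-based). *)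
Definition lam {R : realType} (N : nat) (A : 'M[R[i]]_N) (k : nat) : R :=
  nth 0 (lam_desc A) k.-1.

Definition T0 {R : realType} (n m : nat) (alpha beta : R[i]) (psi : R)
  : 'M[R[i]]_(n + m) :=
  dsum (expi (- psi) *: jordan0 n) ((cabs (beta - alpha))%:C%C%:M).

Definition phi_ {R : realType} (n k : nat) : R := k%:R * pi / n.+1%:R.
Definition psi_ {R : realType} (n k m : nat) : R :=
  ((k%:R - m%:R) * pi / n.+1%:R).

(* D_k and C_{k,m} as predicates on theta (with |beta-alpha| = r). *)
Definition Dset {R : realType} (r : R) (n k : nat) (theta : R) : Prop :=
  r * cos theta <= cos (phi_ n k).
Definition Cset {R : realType} (r : R) (n k m : nat) (theta : R) : Prop :=
  (m < k)%N /\ r * cos theta > cos (psi_ n k m).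

From HB Require Import structures.
From mathcomp Require Import all_boot all_order all_algebra.
From mathcomp Require Import reals trigo.
From mathcomp Require Import complex.
From mathcomp Require Import ring zify.
Import Order.TTheory GRing.Theory Num.Theory.
Local Open Scope ring_scope.

(* Re(e^{i theta} T^0) is block diagonal, with blocks Re(w J_n(0)), |w| = 1, and
   c I_m where c = |beta - alpha| cos theta.  The row vector with entries
   w^l sin((l+1) phi_j) is an eigenvector of Re(w J_n(0)) for cos phi_j
   (j = 1..n), by sin(a - t) + sin(a + t) = 2 cos t sin a and
   sin 0 = sin((n+1) phi_j) = 0; these n distinct values exhaust its spectrum.
   So lambda_k is the k-th largest element of the multiset made of
   cos phi_1 > ... > cos phi_n and m copies of c, found by counting the
   elements strictly above and weakly above each candidate value. *)

Section OrderStatistics.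
Variable R : realDomainType.
Implicit Types (s : seq R) (x : R).

Lemma sorted_ge_nth_upclosed (P : pred R) s i :
  (forall y z, y <= z -> P y -> P z) -> sorted >=%R s -> (i < size s)%N ->
  P (nth 0 s i) = (i < count P s)%N.
Proof.
move=> Pup; elim: s i => // y s IHs i /= ys.
have s_le_y := order_path_min ge_trans ys.
have [Py | nPy] := boolP (P y); last first.
  have Ps0 : count P s = 0%N.
    apply/eqP; rewrite -leqn0 leqNgt -has_count; apply/hasP => -[z zs Pz].
    by case/negP: nPy; apply: Pup Pz; move/allP: s_le_y => /(_ z zs).
  case: i => [|i] /= ltis; rewrite Ps0 ?(negbTE nPy) //; apply/negbTE.
  by apply: contra nPy; apply: Pup; apply: (allP s_le_y); rewrite mem_nth.
case: i => [|i] //= ltis; rewrite add1n ltnS; exact: IHs (path_sorted ys) ltis.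
Qed.

Lemma nth_sort_ge s x k :
  (count (fun y => (x < y)%R) s <= k < count (fun y => (x <= y)%R) s)%N ->
  nth 0 (sort >=%R s) k = x.
Proof.
case/andP=> gt_k lt_k.
have sorted_s := sort_sorted ge_total s.
have lt_k_size : (k < size (sort >=%R s))%N.
  by rewrite size_sort (leq_trans lt_k) ?count_size.
have up_lt y z : y <= z -> x < y -> x < z by move=> yz /lt_le_trans; apply.
have up_le y z : y <= z -> x <= y -> x <= z by move=> yz /le_trans; apply.
apply/le_anti/andP; split.
  rewrite leNgt (sorted_ge_nth_upclosed _ _ _ up_lt sorted_s lt_k_size).
  by rewrite count_sort -leqNgt.
by rewrite (sorted_ge_nth_upclosed _ _ _ up_le sorted_s lt_k_size) count_sort.
Qed.
End OrderStatistics.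

Section CosPhi.
Variables (R : realType) (n : nat).

Lemma phiE k : phi_ n k = k%:R * (pi / n.+1%:R) :> R.
Proof. by rewrite /phi_ mulrA. Qed.

Lemma phi_ltE i j : (phi_ n i < phi_ n j :> R) = (i < j)%N.
Proof. by rewrite !phiE ltr_pM2r ?ltr_nat // divr_gt0 ?pi_gt0 ?ltr0n. Qed.

Lemma phi_leE i j : (phi_ n i <= phi_ n j :> R) = (i <= j)%N.
Proof. by rewrite leNgt phi_ltE -leqNgt. Qed.

Lemma phi0 : phi_ n 0 = 0 :> R.
Proof. by rewrite phiE mul0r. Qed.

Lemma phiSn : phi_ n n.+1 = pi :> R.
Proof. by rewrite /phi_ mulrAC divff ?mul1r ?pnatr_eq0. Qed.

Lemma phi_in_0pi k : (k <= n.+1)%N -> (phi_ n k : R) \in `[0, pi].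
Proof. by move=> le_k; rewrite in_itv /= -phi0 -phiSn !phi_leE. Qed.

Lemma cos_phi_ltE i j : (i <= n.+1)%N -> (j <= n.+1)%N ->
  (cos (phi_ n i) < cos (phi_ n j) :> R) = (j < i)%N.
Proof. by move=> le_i le_j; rewrite ltr_cos ?phi_in_0pi ?phi_ltE. Qed.

Lemma cos_phi_leE i j : (i <= n.+1)%N -> (j <= n.+1)%N ->
  (cos (phi_ n i) <= cos (phi_ n j) :> R) = (j <= i)%N.
Proof. by move=> le_i le_j; rewrite leNgt cos_phi_ltE // -leqNgt. Qed.

Lemma sin_phi_gt0 j : (0 < j <= n)%N -> 0 < sin (phi_ n j) :> R.
Proof.
case/andP=> gt0_j le_jn; apply: sin_gt0_pi.
by rewrite -{1}phi0 -phiSn !phi_ltE gt0_j ltnS.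
Qed.

Lemma sin_mulSn_phi j : sin (n.+1%:R * phi_ n j) = 0 :> R.
Proof.
have -> : n.+1%:R * phi_ n j = 0 + pi *+ j :> R.
  by rewrite add0r /phi_ mulrC mulfVK ?pnatr_eq0 // mulr_natl.
by rewrite alternatingn ?sin0 ?mulr0 //; exact: sinDpi.
Qed.

Lemma psi_phi k m : (m < k)%N -> psi_ n k m = phi_ n (k - m) :> R.
Proof. by move=> lt_mk; rewrite /psi_ /phi_ natrB // ltnW. Qed.

Definition cos_phis : seq R := [seq cos (phi_ n j) | j <- iota 1 n].

Lemma count_gt_cos_phis i : (0 < i <= n)%N ->
  count (fun y => cos (phi_ n i) < y) cos_phis = i.-1.
Proof.
case/andP=> gt0_i le_in; rewrite count_map.
rewrite (@eq_in_count _ _ (fun j => j < 1 + i.-1)%N); last first.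
  by move=> j; rewrite mem_iota => /andP[_ lt_j] /=; rewrite cos_phi_ltE; lia.
by rewrite -size_filter filter_iota_ltn ?size_iota //; lia.
Qed.

Lemma count_ge_cos_phis i : (0 < i <= n)%N ->
  count (fun y => cos (phi_ n i) <= y) cos_phis = i.
Proof.
case/andP=> gt0_i le_in; rewrite count_map.
rewrite (@eq_in_count _ _ (fun j => j < 1 + i)%N); last first.
  by move=> j; rewrite mem_iota => /andP[_ lt_j] /=; rewrite cos_phi_leE; lia.
by rewrite -size_filter filter_iota_ltn ?size_iota.
Qed.

End CosPhi.
Arguments cos_phis {R}.

Section KthLargest.
Variables (R : realType) (n m k : nat) (c : R).
Hypothesis (k_gt0 : (0 < k)%N) (k_le_n : (k <= n)%N).
Let spec := sort >=%R (cos_phis n ++ nseq m c).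

Lemma kth_largest_lowerE : c <= cos (phi_ n k) -> nth 0 spec k.-1 = cos (phi_ n k).
Proof.
move=> le_c; apply: nth_sort_ge; rewrite !count_cat !count_nseq.
by rewrite count_gt_cos_phis ?count_ge_cos_phis ?k_gt0 // ltNge le_c; lia.
Qed.

Lemma kth_largest_upperE : (m < k)%N -> cos (phi_ n (k - m)) < c ->
  nth 0 spec k.-1 = cos (phi_ n (k - m)).
Proof.
move=> lt_mk lt_c; apply: nth_sort_ge; rewrite !count_cat !count_nseq.
by rewrite count_gt_cos_phis ?count_ge_cos_phis ?lt_c ?(ltW lt_c) /=; lia.
Qed.

Lemma kth_largest_middleE : cos (phi_ n k) < c ->
  ((m < k)%N -> c <= cos (phi_ n (k - m))) -> nth 0 spec k.-1 = c.
Proof.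
move=> lt_c le_c; apply: nth_sort_ge.
rewrite !count_cat !count_nseq ltxx lexx mul0n addn0 mul1n; apply/andP; split.
  rewrite -(count_gt_cos_phis R n k) ?k_gt0 //.
  by apply: sub_count => y /= /(lt_trans lt_c).
have [lt_mk | le_km] := ltnP m k; last by rewrite ltn_addl //; lia.
have ge_c : (k - m <= count (fun y => (c <= y)%R) (cos_phis n))%N.
  rewrite -(count_ge_cos_phis R n (k - m)); last lia.
  by apply: sub_count => y /= /(le_trans (le_c lt_mk)).
by apply: leq_trans (leq_add ge_c (leqnn m)); lia.
Qed.

End KthLargest.

Section ShiftSums.
Variable (S : pzSemiRingType).

Lemma sum_ord_mul_succ_eq (F : nat -> S) n l :
  \sum_(i < n) F i * (l == i.+1)%:R = if (0 < l <= n)%N then F l.-1 else 0.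
Proof.
elim: n => [|n IHn]; first by rewrite big_ord0; case: l.
rewrite big_ord_recr /= IHn; case: (ltngtP l n.+1) => [lt_l | gt_l | ->].
- by rewrite mulr0 addr0 -(ltnS l n) lt_l andbT.
- by rewrite mulr0 addr0 andbF (leqNgt l n) (ltnW gt_l) andbF.
- by rewrite /= ltnn mulr1 add0r.
Qed.

Lemma sum_ord_mul_eq_succ (F : nat -> S) n l :
  \sum_(i < n) F i * ((i : nat) == l.+1)%:R = if (l.+1 < n)%N then F l.+1 else 0.
Proof.
elim: n => [|n IHn]; first by rewrite big_ord0.
rewrite big_ord_recr /= IHn; case: (ltngtP l.+1 n) => [lt_l | gt_l | <-].
- by rewrite mulr0 addr0 ltnS ltnW.
- by rewrite mulr0 addr0 ltnS leqNgt gt_l.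
- by rewrite mulr1 add0r ltnSn.
Qed.

End ShiftSums.

Lemma sinB_add_sinD (R : realType) (a t : R) :
  sin (a - t) + sin (a + t) = 2 * cos t * sin a.
Proof. by rewrite sinB sinD; ring. Qed.

Section ReMxJordan.
Variables (R : realType) (n : nat) (w : R[i]).
Hypothesis w_unit : `|w| = 1.
Local Notation A := (ReMx (w *: jordan0 n)).

Lemma ReMx_jordan_mxE i l :
  A i l = 2^-1 * (w * (l == i.+1 :> nat)%:R + w^* * (i == l.+1 :> nat)%:R).
Proof.
rewrite /ReMx /adjmx !mxE rmorphM /=.
by case: eqP => _; case: eqP => _; rewrite /= ?rmorph0 ?rmorph1.
Qed.

Lemma eigenvalue_ReMx_jordan j : (0 < j <= n)%N -> eigenvalue A (cos (phi_ n j))%:C%C.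
Proof.
case/andP=> gt0_j le_jn; set t := phi_ n j.
have ww : w^* * w = 1 by rewrite -normCKC w_unit expr1n.
pose s p : R[i] := (sin (p%:R * t))%:C%C.
have s0 : s 0%N = 0 by rewrite /s mul0r sin0.
have sSn : s n.+1 = 0 by rewrite /s sin_mulSn_phi.
have sS2 p : s p + s p.+2 = 2 * (cos t)%:C%C * s p.+1.
  rewrite /s; have -> : p%:R * t = p.+1%:R * t - t by rewrite -natr1 mulrDl mul1r addrK.
  have -> : p.+2%:R * t = p.+1%:R * t + t by rewrite -[p.+2%:R]natr1 mulrDl mul1r.
  by rewrite -rmorphD sinB_add_sinD !rmorphM rmorph_nat.
pose f i := w ^+ i * s i.+1.
apply/eigenvalueP; exists (\row_(l < n) f l); last first.
  apply/negP => /eqP/rowP/(_ (Ordinal (leq_trans gt0_j le_jn))).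
  rewrite !mxE /f /s expr0 !mul1r => /(congr1 (@complex.Re R)) /= sin_t0.
  suff : 0 < sin t by rewrite sin_t0 ltxx.
  by apply: sin_phi_gt0; rewrite gt0_j.
apply/rowP => l; rewrite !mxE.
under eq_bigr => i _ do rewrite mxE ReMx_jordan_mxE.
transitivity (2^-1 * (w * \sum_(i < n) f i * (l == i.+1 :> nat)%:R
                    + w^* * \sum_(i < n) f i * (i == l.+1 :> nat)%:R)).
  by rewrite !big_distrr -big_split big_distrr; apply: eq_bigr => i _ /=; ring.
rewrite sum_ord_mul_succ_eq sum_ord_mul_eq_succ.
have from_left : w * (if (0 < l <= n)%N then f l.-1 else 0) = w ^+ l * s l.
  case: (nat_of_ord l) (ltn_ord l) => [|l'] lt_l /=; first by rewrite s0 !mulr0.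
  by rewrite (ltnW lt_l) /f mulrA -exprS.
have from_right : w^* * (if (l.+1 < n)%N then f l.+1 else 0) = w ^+ l * s l.+2.
  case: ifP => [_ | ge_l]; first by rewrite /f mulrA exprS mulrA ww mul1r.
  have -> : l.+2 = n.+1 by move: (ltn_ord l) ge_l; lia.
  by rewrite sSn !mulr0.
by rewrite from_left from_right -mulrDr sS2 /f; field.
Qed.

Lemma char_poly_ReMx_jordan :
  char_poly A = \prod_(x <- cos_phis n) ('X - (x%:C%C)%:P).
Proof.
pose rs := [seq (cos (phi_ n j) : R)%:C%C | j <- iota 1 n].
have -> : \prod_(x <- cos_phis n) ('X - (x%:C%C)%:P) = \prod_(z <- rs) ('X - z%:P).
  by rewrite !big_map.
rewrite {1}(@all_roots_prod_XsubC _ (char_poly A) rs).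
- by rewrite (monicP (char_poly_monic _)) scale1r.
- by rewrite size_char_poly size_map size_iota.
- apply/allP => z /mapP[j]; rewrite mem_iota => j_in ->.
  by rewrite -eigenvalue_root_char eigenvalue_ReMx_jordan //; lia.
rewrite uniq_rootsE map_inj_in_uniq ?iota_uniq // => i j.
rewrite !mem_iota => i_in j_in /complexI eq_cos; apply/eqP.
have [le_i le_j] : (i <= n.+1)%N /\ (j <= n.+1)%N by lia.
rewrite eqn_leq -(@cos_phi_leE R n _ _ le_j le_i).
by rewrite -(@cos_phi_leE R n _ _ le_i le_j) eq_cos lexx.
Qed.

End ReMxJordan.

Lemma char_poly_block_scalar (F : comNzRingType) n m (A : 'M[F]_n) (c : F) :
  char_poly (block_mx A 0 0 (c%:M : 'M_m)) = char_poly A * ('X - c%:P) ^+ m.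
Proof.
rewrite /char_poly char_block_diag_mx det_ublock -!/(char_poly _).
congr (_ * _); rewrite char_poly_trig ?scalar_mx_is_trig //.
under eq_bigr => i _ do rewrite mxE eqxx mulr1n.
by rewrite prodr_const card_ord.
Qed.

Section HermitianPart.
Variable R : realType.

Lemma lam_desc_char_poly N (A : 'M[R[i]]_N) (s : seq R) :
  char_poly A = \prod_(x <- s) ('X - (x%:C%C)%:P) -> lam_desc A = sort >=%R s.
Proof.
move=> charA; rewrite /lam_desc /eigs_mult.
case: closed_field_poly_normal => rs /= charE.
have : perm_eq rs [seq x%:C%C | x <- s].
  apply: prod_XsubC_eq; rewrite big_map -charA charE.
  by rewrite (monicP (char_poly_monic _)) scale1r.
move/(perm_map (@complex.Re R)); rewrite -map_comp map_id_in // => perm_s.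
by apply/perm_sortP => //; [exact: ge_total | exact: ge_trans | exact: ge_anti].
Qed.

Lemma ReMx_block_diag n1 n2 (A : 'M[R[i]]_n1) (B : 'M[R[i]]_n2) :
  ReMx (block_mx A 0 0 B) = block_mx (ReMx A) 0 0 (ReMx B).
Proof.
rewrite /ReMx /adjmx map_block_mx tr_block_mx !map_mx0 !trmx0.
by rewrite add_block_mx scale_block_mx !addr0 !scaler0.
Qed.

Lemma ReMx_scalar N (z : R[i]) : ReMx (z%:M : 'M_N) = ('Re z)%:M.
Proof.
by apply/matrixP => i j; rewrite !mxE eq_sym rmorphMn -mulrnDl ReE mulrC mulrnAl.
Qed.

Lemma norm_expi (t : R) : `|expi t| = 1.
Proof. by rewrite normc_def /= cos2Dsin2 sqrtr1. Qed.

Lemma Re_expi_mul_real (t r : R) : 'Re (expi t * r%:C%C) = (r * cos t)%:C%C.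
Proof. by rewrite -complexRe /= mulr0 subr0 mulrC. Qed.

Lemma lam_desc_ReMx_T0 n m (alpha beta : R[i]) (psi theta : R) :
  lam_desc (ReMx (expi theta *: T0 n m alpha beta psi)) =
  sort >=%R (cos_phis n ++ nseq m (cabs (beta - alpha) * cos theta)).
Proof.
rewrite /T0 /dsum scale_block_mx !scaler0 scalerA scale_scalar_mx.
rewrite ReMx_block_diag ReMx_scalar Re_expi_mul_real; apply: lam_desc_char_poly.
rewrite char_poly_block_scalar char_poly_ReMx_jordan; last first.
  by rewrite normrM !norm_expi mulr1.
by rewrite big_cat /= big_nseq iter_mulr_1.
Qed.

End HermitianPart.

Theorem lemma3p1 (R : realType) (n m : nat) (alpha beta : R[i]) (psi : R)
  (hn : (2 <= n)%N) (hm : (1 <= m)%N)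
  (hpsi : beta - alpha = (cabs (beta - alpha))%:C%C * expi psi)
  (k : nat) (hk : (1 <= k <= n)%N) (theta : R)
  (htheta : 0 <= theta <= 2 * pi) :
  let r := cabs (beta - alpha) in
  let lk := lam (ReMx (expi theta *: T0 n m alpha beta psi)) k in
  (Cset r n k m theta -> lk = cos (psi_ n k m)) /\
  (~ Dset r n k theta -> ~ Cset r n k m theta -> lk = r * cos theta) /\
  (Dset r n k theta -> lk = cos (phi_ n k)).
Proof.
move=> r lk; case/andP: hk => k_gt0 k_le_n.
have lkE : lk = nth 0 (sort >=%R (cos_phis n ++ nseq m (r * cos theta))) k.-1.
  by rewrite /lk /lam lam_desc_ReMx_T0.
rewrite /Cset /Dset lkE; split; [|split].
- by case=> lt_mk; rewrite psi_phi // => /kth_largest_upperE ->.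
- move=> notD notC; apply: kth_largest_middleE => //.
    by rewrite ltNge; apply/negP.
  by move=> lt_mk; rewrite leNgt; apply/negP => ltC; apply: notC; rewrite psi_phi.
- exact: kth_largest_lowerE.
Qed.
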